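(* (Forbid trumps permit.) For every entity store $\mu$, every finite set of policies $C$, and every request $\sigma$: if there exists a policy $c \in C$ with effect $\mathtt{forbid}$ such that $\mathrm{toexp}(c)$ evaluates to $\mathtt{true}$ under $\mu,\sigma$, then $\mathrm{authorize}(\mu, C, \sigma) = \mathit{Deny}$.
   Context: Entity references have the form $E::s$ with $E$ an entity type name and $s$ a string. An entity store $\mu$ is a finite partial map from entity references to pairs $(r,h)$, where $r$ is a record value (the attributes) and $h$ is a finite set of entity references (the ancestors). For an entity reference $u$, let $h_\mu(u)$ be the second component of $\mu(u)$ if $u \in \mathrm{dom}(\mu)$, and $\emptyset$ otherwise. A request $\sigma$ maps the variables $\mathtt{principal}$, $\mathtt{action}$, $\mathtt{resource}$ to entity references and $\mathtt{context}$ to a record value. Expressions are evaluated by a deterministic call-by-value, left-to-right semantics that may also get stuck (raise an error); we say $e$ evaluates to $v$ under $\mu,\sigma$ if evaluation terminates with value $v$. This semantics satisfies: the literal $\mathtt{true}$ evaluates to $\mathtt{true}$; $e_1 \,\&\&\, e_2$ evaluates to $\mathtt{true}$ iff $e_1$ evaluates to $\mathtt{true}$ and $e_2$ evaluates to $\mathtt{true}$; for $x \in \{\mathtt{principal},\mathtt{resource}\}$ and entity reference $u$, the expression $x == u$ evaluates to $\mathtt{true}$ iff $\sigma(x) = u$, and $x\ \mathtt{in}\ u$ evaluates to $\mathtt{true}$ iff $\sigma(x) = u$ or $u \in h_\mu(\sigma(x))$. A policy $c$ consists of an effect ($\mathtt{permit}$ or $\mathtt{forbid}$); a principal scope, which is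 either unconstrained or one of $\mathtt{principal} == u$, $\mathtt{principal}\ \mathtt{in}\ u$; an action scope (unconstrained, $\mathtt{action} == u$, $\mathtt{action}\ \mathtt{in}\ u$, or $\mathtt{action}\ \mathtt{in}\ [u_1,\dots,u_n]$); a resource scope, either unconstrained or one of $\mathtt{resource} == u$, $\mathtt{resource}\ \mathtt{in}\ u$; and a finite list of conditions $\mathtt{when}\{e\}$ or $\mathtt{unless}\{e\}$. The expression $\mathrm{toexp}(c)$ is the $\&\&$-conjunction of the principal scope, action scope, resource scope (each replaced by $\mathtt{true}$ if unconstrained), and the conditions ($\mathtt{when}\{e\}$ contributes $e$, $\mathtt{unless}\{e\}$ contributes $!e$). Let $\mathrm{pof}(c)$ be the entity reference $u$ named in the principal scope of $c$, or a special symbol $\mathtt{Any}$ if unconstrained; define $\mathrm{rof}(c)$ likewise for the resource scope. With $P = \sigma(\mathtt{principal})$, $R = \sigma(\mathtt{resource})$, let $K = (h_\mu(P) \cup \{P, \mathtt{Any}\}) \times (h_\mu(R) \cup \{R, \mathtt{Any}\})$ and $\mathrm{slice}(C,\sigma) = \{ c \in C : (\mathrm{pof}(c), \mathrm{rof}(c)) \in K\}$. Define $C_S = \{ c \in \mathrm{slice}(C,\sigma) : \mathrm{toexp}(c) \text{ evaluates to } \mathtt{true} \text{ under } \mu,\sigma\}$, and $\mathrm{authorize}(\mu,C,\sigma) = \mathit{Allow}$ if $C_S$ contains no $\mathtt{forbid}$ policy and at least one $\mathtt{permit}$ policy, and $\mathit{Deny}$ otherwise. *)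

(* The evaluation semantics is
   kept abstract: any deterministic "evaluates to" relation satisfying the
   properties listed in the paper's context (bundled in [Semantics]). *)
From Stdlib Require Import String List ZArith Classical ClassicalEpsilon.
Import ListNotations.
Set Implicit Arguments.

Definition entity_type := string.
Definition uid : Type := (entity_type * string)%type.

Definition uid_eq_dec : forall u v : uid, {u = v} + {u <> v}.
Proof. decide equality; apply string_dec. Defined.

Inductive value : Type :=
| VBool : bool -> value
| VInt : Z -> value
| VString : string -> value
| VEntity : uid -> value
| VSet : list value -> value
| VRecord : list (string * value) -> value.

Definition record := list (string * value).

Inductive var : Type := Principal | Action | Resource | Context.

Inductive expr : Type :=
| Lit : value -> expr
| Var : var -> expr
| Not : expr -> expr
| And : expr -> expr -> expr
| Or : expr -> expr -> expr
| If : expr -> expr -> expr -> expr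
| Eq : expr -> expr -> expr
| Lt : expr -> expr -> expr
| Le : expr -> expr -> expr
| Add : expr -> expr -> expr
| Sub : expr -> expr -> expr
| Mul : expr -> expr -> expr
| InE : expr -> expr -> expr
| Contains : expr -> expr -> expr
| GetAttr : expr -> string -> expr
| HasAttr : expr -> string -> expr
| SetE : list expr -> expr
| RecordE : list (string * expr) -> expr.

Definition ETrue : expr := Lit (VBool true).

(* Entity store: finite partial map from entity references to
   (attributes, ancestors), represented as an association list. *)
Definition store := list (uid * (record * list uid)).

Fixpoint lookup (mu : store) (u : uid) : option (record * list uid) :=
  match mu with
  | [] => None
  | (v, d) :: mu' => if uid_eq_dec u v then Some d else lookup mu' u
  end.

Definition ancestors (mu : store) (u : uid) : list uid :=
  match lookup mu u with Some (_, h) => h | None => [] end.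

Record request := mkRequest {
  req_principal : uid;
  req_action : uid;
  req_resource : uid;
  req_context : record }.

Definition req_var (sigma : request) (x : var) : value :=
  match x with
  | Principal => VEntity (req_principal sigma)
  | Action => VEntity (req_action sigma)
  | Resource => VEntity (req_resource sigma)
  | Context => VRecord (req_context sigma)
  end.

Record Semantics := {
  evals : store -> request -> expr -> value -> Prop;
  evals_det : forall mu s e v1 v2, evals mu s e v1 -> evals mu s e v2 -> v1 = v2;
  evals_true : forall mu s, evals mu s ETrue (VBool true);
  evals_and : forall mu s e1 e2,
    evals mu s (And e1 e2) (VBool true) <->
    (evals mu s e1 (VBool true) /\ evals mu s e2 (VBool true));
  evals_eq : forall mu s x u, (x = Principal \/ x = Resource) ->
    (evals mu s (Eq (Var x) (Lit (VEntity u))) (VBool true) <->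
     req_var s x = VEntity u);
  evals_in : forall mu s x u, (x = Principal \/ x = Resource) ->
    (evals mu s (InE (Var x) (Lit (VEntity u))) (VBool true) <->
     (exists w, req_var s x = VEntity w /\ (w = u \/ In u (ancestors mu w))))
}.

Inductive effect : Type := Permit | Forbid.

Inductive scope : Type := ScAny | ScEq : uid -> scope | ScIn : uid -> scope.

Inductive ascope : Type :=
| AScAny | AScEq : uid -> ascope | AScIn : uid -> ascope
| AScInList : list uid -> ascope.

Inductive condition : Type := When : expr -> condition | Unless : expr -> condition.

Record policy := mkPolicy {
  pol_effect : effect;
  pol_principal : scope;
  pol_action : ascope;
  pol_resource : scope;
  pol_conditions : list condition }.

Definition scope_exp (x : var) (sc : scope) : expr :=
  match sc with
  | ScAny => ETrue
  | ScEq u => Eq (Var x) (Lit (VEntity u))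
  | ScIn u => InE (Var x) (Lit (VEntity u))
  end.

Definition ascope_exp (sc : ascope) : expr :=
  match sc with
  | AScAny => ETrue
  | AScEq u => Eq (Var Action) (Lit (VEntity u))
  | AScIn u => InE (Var Action) (Lit (VEntity u))
  | AScInList us => InE (Var Action) (SetE (map (fun u => Lit (VEntity u)) us))
  end.

Definition cond_exp (c : condition) : expr :=
  match c with When e => e | Unless e => Not e end.

Definition conj_list (es : list expr) : expr := fold_right And ETrue es.

Definition toexp (c : policy) : expr :=
  conj_list (scope_exp Principal (pol_principal c)
             :: ascope_exp (pol_action c)
             :: scope_exp Resource (pol_resource c)
             :: map cond_exp (pol_conditions c)).

(* pof / rof: None stands for the special symbol Any *)
Definition scope_uid (sc : scope) : option uid :=
  match sc with ScAny => None | ScEq u => Some u | ScIn u => Some u end.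
Definition pof (c : policy) : option uid := scope_uid (pol_principal c).
Definition rof (c : policy) : option uid := scope_uid (pol_resource c).

Definition key_ok (mu : store) (X : uid) (k : option uid) : Prop :=
  match k with None => True | Some u => u = X \/ In u (ancestors mu X) end.

Definition in_slice (mu : store) (sigma : request) (c : policy) : Prop :=
  key_ok mu (req_principal sigma) (pof c) /\ key_ok mu (req_resource sigma) (rof c).

Definition in_CS (S : Semantics) (mu : store) (C : list policy) (sigma : request)
  (c : policy) : Prop :=
  In c C /\ in_slice mu sigma c /\ evals S mu sigma (toexp c) (VBool true).

Inductive decision : Type := Allow | Deny.

Definition authorize (S : Semantics) (mu : store) (C : list policy) (sigma : request)
  : decision :=
  if excluded_middle_informative
       ((forall c, in_CS S mu C sigma c -> pol_effect c <> Forbid) /\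
        (exists c, in_CS S mu C sigma c /\ pol_effect c = Permit))
  then Allow else Deny.

(* A policy whose [toexp] evaluates to true satisfies its principal and
   resource scopes, and a satisfied scope [x == u] or [x in u] names an
   entity [u] that is [σ(x)] or one of its ancestors.  So slicing never
   discards a satisfied policy: a satisfied forbid policy lies in [C_S],
   which rules out [Allow]. *)
From Stdlib Require Import List ClassicalEpsilon.

Section Slicing.

Variables (S : Semantics) (mu : store) (sigma : request).

Lemma evals_conj_list es :
  evals S mu sigma (conj_list es) (VBool true) ->
  forall e, In e es -> evals S mu sigma e (VBool true).
Proof.
  induction es as [|e0 es IH]; simpl; intros Hes e Hin; [contradiction|].
  apply (evals_and S) in Hes as [He0 Hes].
  destruct Hin as [<- | Hin]; auto.
Qed.

Lemma evals_scope_exp_key_ok x X sc :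
  (x = Principal \/ x = Resource) -> req_var sigma x = VEntity X ->
  evals S mu sigma (scope_exp x sc) (VBool true) ->
  key_ok mu X (scope_uid sc).
Proof.
  intros Hx HX Hsc.
  destruct sc as [|u|u]; simpl in *.
  - exact I.
  - apply (evals_eq S) in Hsc; auto.
    left; congruence.
  - apply (evals_in S) in Hsc as [w [Hw Hu]]; auto.
    rewrite HX in Hw; injection Hw as <-.
    destruct Hu; [left | right]; congruence.
Qed.

Lemma evals_toexp_in_slice c :
  evals S mu sigma (toexp c) (VBool true) -> in_slice mu sigma c.
Proof.
  intros Hc.
  pose proof (evals_conj_list _ Hc) as Hconj.
  split.
  - apply (evals_scope_exp_key_ok Principal); simpl; auto.
    apply Hconj; simpl; auto.
  - apply (evals_scope_exp_key_ok Resource); simpl; auto.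
    apply Hconj; simpl; auto.
Qed.

Lemma authorize_Deny_of_forbid C c :
  in_CS S mu C sigma c -> pol_effect c = Forbid -> authorize S mu C sigma = Deny.
Proof.
  intros Hc Hforbid.
  unfold authorize.
  destruct excluded_middle_informative as [[Hno_forbid _] | _]; [|reflexivity].
  exfalso; exact (Hno_forbid c Hc Hforbid).
Qed.

End Slicing.

Theorem mainTheorem1 (S : Semantics) (mu : store) (C : list policy) (sigma : request) :
  (exists c, In c C /\ pol_effect c = Forbid /\ evals S mu sigma (toexp c) (VBool true)) ->
  authorize S mu C sigma = Deny.
Proof.
  intros [c [Hin [Hforbid Hc]]].
  apply (authorize_Deny_of_forbid S mu sigma C c); [|exact Hforbid].
  split; [exact Hin | split; [exact (evals_toexp_in_slice S mu sigma c Hc) | exact Hc]].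
Qed.
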